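(* Let $N=\{1,\ldots,n\}$, let $\mathscr{B}_1,\ldots,\mathscr{B}_p\in\mathfrak{B}^*(n)$, let $\mathscr{F}_k=\{v\in\mathscr{BG}(n):\sum_{S\in\mathscr{B}_k}\lambda^{\mathscr{B}_k}_Sv(S)=v(N)\}$ be the facet of $\mathscr{BG}(n)$ associated with $\mathscr{B}_k$, and consider the face $\mathscr{F}=\mathscr{F}_1\cap\cdots\cap\mathscr{F}_p$. Then every game in $\mathscr{F}$ has a core reduced to a single point if and only if the rank of the family of vectors $\{\mathbf{1}^S: S\in\mathscr{B}_1\cup\cdots\cup\mathscr{B}_p\}$ is $n$.
   Context: A game on $N$ is a map $v:2^N\to\mathbb{R}$ with $v(\varnothing)=0$. $\mathbf{1}^S\in\mathbb{R}^N$ is the characteristic vector of $S$. The core is $C(v)=\{x\in\mathbb{R}^N:\sum_{i\in S}x_i\geqslant v(S)\ \forall S,\ \sum_{i\in N}x_i=v(N)\}$. A collection $\mathscr{B}$ of nonempty subsets of $N$ is balanced if there exist positive weights $(\lambda_S)_{S\in\mathscr{B}}$ with $\sum_{S\in\mathscr{B},S\ni i}\lambda_S=1$ for all $i$; minimal balanced if no proper subcollection is balanced, with unique weights $\lambda^{\mathscr{B}}_S$. $\mathfrak{B}^*(n)$ is the set of minimal balanced collections other than $\{N\}$. $\mathscr{BG}(n)=\{v:\sum_{S\in\mathscr{B}}\lambda^{\mathscr{B}}_Sv(S)\leqslant v(N)\ \forall\mathscr{B}\in\mathfrak{B}^*(n)\}$. *)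

(* Players N = 'I_n (i.e. {0,...,n-1} standing for {1,...,n}). *)
From HB Require Import structures.
From mathcomp Require Import all_boot all_order all_algebra.
From Stdlib Require Import ClassicalEpsilon.
Set Implicit Arguments. Unset Strict Implicit. Unset Printing Implicit Defensive.
Import Order.TTheory GRing.Theory Num.Theory.
Local Open Scope ring_scope.

Section Games.
Variables (R : realFieldType) (n : nat).

Definition is_game (v : {set 'I_n} -> R) : Prop := v set0 = 0.

Definition charvec (S : {set 'I_n}) : 'rV[R]_n := \row_(j < n) (j \in S)%:R.

Definition in_core (v : {set 'I_n} -> R) (x : 'rV[R]_n) : Prop :=
  (forall S : {set 'I_n}, v S <= \sum_(i in S) x 0 i) /\
  \sum_(i < n) x 0 i = v setT.

Definition balancing_weights (B : {set {set 'I_n}}) (lam : {set 'I_n} -> R) : Prop :=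
  (forall S, S \in B -> 0 < lam S) /\
  (forall i : 'I_n, \sum_(S in B | i \in S) lam S = 1).

Definition balanced (B : {set {set 'I_n}}) : Prop :=
  set0 \notin B /\ exists lam, balancing_weights B lam.

Definition minimal_balanced (B : {set {set 'I_n}}) : Prop :=
  balanced B /\ forall B' : {set {set 'I_n}}, B' \proper B -> ~ balanced B'.

Definition Bstar (B : {set {set 'I_n}}) : Prop :=
  minimal_balanced B /\ B <> [set setT].

(* the (unique, for minimal balanced B) weights lambda^B *)
Definition lambdaB (B : {set {set 'I_n}}) : {set 'I_n} -> R :=
  epsilon (inhabits (fun _ => 0)) (balancing_weights B).

Definition Bsum (B : {set {set 'I_n}}) (v : {set 'I_n} -> R) : R :=
  \sum_(S in B) lambdaB B S * v S.

Definition BG (v : {set 'I_n} -> R) : Prop :=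
  is_game v /\ forall B, Bstar B -> Bsum B v <= v setT.

Definition facet (B : {set {set 'I_n}}) (v : {set 'I_n} -> R) : Prop :=
  BG v /\ Bsum B v = v setT.

Definition core_singleton (v : {set 'I_n} -> R) : Prop :=
  exists x, in_core v x /\ forall y, in_core v y -> y = x.

Definition charmx (U : {set {set 'I_n}}) : 'M[R]_(#|U|, n) :=
  \matrix_(i < #|U|) charvec (enum_val i).

End Games.

(* If the vectors 1^S, S in B_1 u ... u B_p, have rank < n, take u <> 0 with u(S) = 0 for all
   these S; then u(N) = 0 because B_1 is balanced, and the game S |-> -|u(S)| lies on every facet
   while its core contains both 0 and u.
   Conversely, a game v of the face lies in BG(n), so its core is nonempty by the
   Bondareva-Shapley theorem: Farkas' lemma (by Fourier-Motzkin elimination) turns an empty core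
   into a balanced collection with sum_S lambda_S v(S) > v(N), and pivoting its weights along
   balancing directions shrinks it to a minimal balanced one without losing that inequality.
   For x in the core, sum_S lambda_S (x(S) - v(S)) = x(N) - v(N) = 0 with nonnegative terms, so
   x(S) = v(S) for every S in every B_k, and full rank leaves a single solution. *)

From HB Require Import structures.
From mathcomp Require Import all_boot all_order all_algebra.
From mathcomp Require Import lra.
From Stdlib Require Import Classical ClassicalEpsilon.
Set Implicit Arguments. Unset Strict Implicit. Unset Printing Implicit Defensive.
Import Order.TTheory GRing.Theory Num.Theory.
Local Open Scope ring_scope.

Section FourierMotzkin.
Variable R : realFieldType.

(* Vectors are [nat -> R] read on [0, m), so that eliminating the last coordinate is
   induction on [m]. *)
Definition dot m (a x : nat -> R) := \sum_(k < m) a k * x k.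

Definition infeasible m (I : finType) (a : I -> nat -> R) (b : I -> R) :=
  forall x, ~ (forall i, b i <= dot m (a i) x).

Definition farkas_certificate m (I : finType) (a : I -> nat -> R) (b : I -> R) (y : I -> R) :=
  [/\ forall i, 0 <= y i, forall k, (k < m)%N -> \sum_i y i * a i k = 0
    & 0 < \sum_i y i * b i].

Lemma finite_separation (I : finType) (P Q : pred I) (f g : I -> R) :
  (forall i j, P i -> Q j -> f i <= g j) ->
  exists t, (forall i, P i -> f i <= t) /\ (forall j, Q j -> t <= g j).
Proof.
move=> fg; case: (pickP P) => [i0 Pi0|P0].
  have [i Pi fi_max] := arg_maxP f Pi0.
  by exists (f i); split=> [j /fi_max|j Qj] //; apply: fg.
case: (pickP Q) => [j0 Qj0|Q0].
  have [j Qj gj_min] := arg_minP g Qj0.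
  by exists (g j); split=> [i|i /gj_min]; rewrite ?P0.
by exists 0; split=> i; rewrite ?P0 ?Q0.
Qed.

Lemma sum_delta (I : finType) (i : I) (r : I -> R) : \sum_l (l == i)%:R * r l = r i.
Proof.
rewrite (bigD1 i) //= eqxx mul1r big1 ?addr0 // => l /negbTE ->.
by rewrite mul0r.
Qed.

Lemma dot_extend m (a x : nat -> R) t :
  dot m.+1 a (fun k => if k == m then t else x k) = dot m a x + a m * t.
Proof.
rewrite /dot big_ord_recr /= eqxx; congr (_ + _).
by apply: eq_bigr => k _; rewrite ltn_eqF.
Qed.

Section Combination.
Variables (I J : finType) (w : J -> I -> R).

Definition comb_lhs (a : I -> nat -> R) o k := \sum_l w o l * a l k.
Definition comb_rhs (b : I -> R) o := \sum_l w o l * b l.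

Lemma dot_comb_lhs m a o x : dot m (comb_lhs a o) x = \sum_l w o l * dot m (a l) x.
Proof.
rewrite /dot /comb_lhs (eq_bigr (fun k : 'I_m => \sum_l w o l * (a l k * x k))).
  by rewrite exchange_big; apply: eq_bigr => l _; rewrite big_distrr.
by move=> k _; rewrite big_distrl; apply: eq_bigr => l _ /=; rewrite mulrA.
Qed.

Lemma sum_comb (y : J -> R) (r : I -> R) :
  \sum_o y o * \sum_l w o l * r l = \sum_l (\sum_o y o * w o l) * r l.
Proof.
rewrite (eq_bigr (fun o => \sum_l y o * w o l * r l)).
  by rewrite exchange_big; apply: eq_bigr => l _; rewrite big_distrl.
by move=> o _; rewrite big_distrr; apply: eq_bigr => l _ /=; rewrite mulrA.
Qed.

Lemma farkas_certificate_comb m a b y :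
  (forall o l, 0 <= w o l) -> (forall o, \sum_l w o l * a l m = 0) ->
  farkas_certificate m (comb_lhs a) (comb_rhs b) y ->
  farkas_certificate m.+1 a b (fun l => \sum_o y o * w o l).
Proof.
move=> w_ge0 w_elim [y_ge0 y_lhs y_rhs]; split.
- by move=> l; apply: sumr_ge0 => o _; apply: mulr_ge0.
- move=> k; rewrite ltnS leq_eqVlt -sum_comb => /orP[/eqP->|/y_lhs //].
  by rewrite big1 // => o _; rewrite w_elim mulr0.
- by rewrite -sum_comb.
Qed.

End Combination.

Section Elimination.
Variables (I : finType) (c : I -> R).

(* Fourier-Motzkin multipliers for the coefficients [c] of the eliminated coordinate: [inl i]
   keeps an inequality with [c i = 0], [inr (i, j)] adds two with [c i > 0 > c j] so that the
   coordinate cancels. *)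
Definition fm_coef (o : I + I * I) (l : I) : R :=
  match o with
  | inl i => if c i == 0 then (l == i)%:R else 0
  | inr (i, j) => if (0 < c i) && (c j < 0) then c i * (l == j)%:R - c j * (l == i)%:R else 0
  end.

Lemma fm_coefE o (r : I -> R) : \sum_l fm_coef o l * r l =
  match o with
  | inl i => if c i == 0 then r i else 0
  | inr (i, j) => if (0 < c i) && (c j < 0) then c i * r j - c j * r i else 0
  end.
Proof.
case: o => [i|[i j]] /=; case: ifP => _; rewrite ?sum_delta.
- by [].
- by rewrite big1 // => l _; rewrite mul0r.
- rewrite (eq_bigr (fun l => c i * ((l == j)%:R * r l) - c j * ((l == i)%:R * r l))).
    by rewrite sumrB -!big_distrr /= !sum_delta.
  by move=> l _; rewrite mulrBl !mulrA.
- by rewrite big1 // => l _; rewrite mul0r.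
Qed.

Lemma fm_coef_ge0 o l : 0 <= fm_coef o l.
Proof.
case: o => [i|[i j]] /=; case: ifP => // /andP[ci_gt0 cj_lt0].
rewrite subr_ge0 (@le_trans _ _ 0) //.
  by rewrite mulr_le0_ge0 ?ler0n ?ltW.
by rewrite mulr_ge0 ?ler0n ?ltW.
Qed.

Lemma fm_coef_elim o : \sum_l fm_coef o l * c l = 0.
Proof.
rewrite fm_coefE; case: o => [i|[i j]]; case: ifP => //; first by move/eqP.
by rewrite mulrC subrr.
Qed.

End Elimination.

Lemma fm_extend m (I : finType) (a : I -> nat -> R) (b : I -> R) x :
  let w := fm_coef (fun i => a i m) in
  (forall o, comb_rhs w b o <= dot m (comb_lhs w a o) x) ->
  exists x', forall i, b i <= dot m.+1 (a i) x'.
Proof.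
move=> w sol; pose r i := b i - dot m (a i) x.
have residual o : \sum_l w o l * r l <= 0.
  have := sol o; rewrite dot_comb_lhs -subr_le0 /comb_rhs -sumrB.
  by under eq_bigr do rewrite -mulrBr.
have ratio i j : 0 < a i m -> a j m < 0 -> r i / a i m <= r j / a j m.
  move=> ai_gt0 aj_lt0; have := residual (inr (i, j)).
  rewrite fm_coefE ai_gt0 aj_lt0 /= => h.
  rewrite ler_ndivlMr // mulrAC ler_pdivlMr //; lra.
have [t [t_ge t_le]] := finite_separation ratio.
exists (fun k => if k == m then t else x k) => i; rewrite dot_extend.
case: (ltrgtP (a i m) 0) => ai.
- by have := t_le i ai; rewrite ler_ndivlMr // /r; lra.
- by have := t_ge i ai; rewrite ler_pdivrMr // /r; lra.
- by have := residual (inl i); rewrite fm_coefE ai eqxx /r; lra.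
Qed.

Lemma farkas m (I : finType) (a : I -> nat -> R) (b : I -> R) :
  infeasible m a b -> exists y, farkas_certificate m a b y.
Proof.
elim: m I a b => [|m IH] I a b infeas.
  case: (pickP (fun i => 0 < b i)) => [i bi_gt0|b_le0]; last first.
    by case: (infeas (fun=> 0)) => i; rewrite /dot big_ord0 leNgt b_le0.
  by exists (fun l => (l == i)%:R); split=> [l|//|]; rewrite ?ler0n ?sum_delta.
pose w := fm_coef (fun i => a i m).
have [y cert] : exists y, farkas_certificate m (comb_lhs w a) (comb_rhs w b) y.
  apply: IH => x sol; have [x' sol'] := fm_extend sol; exact: infeas sol'.
exists (fun l => \sum_o y o * w o l).
by apply: farkas_certificate_comb cert; [apply: fm_coef_ge0 | apply: fm_coef_elim].
Qed.

End FourierMotzkin.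

Section Balanced.
Variables (R : realFieldType) (n : nat).
Implicit Types (B : {set {set 'I_n}}) (w d : {set 'I_n} -> R).

Lemma balancing_weights_sum B w (x : 'I_n -> R) : balancing_weights B w ->
  \sum_(S in B) w S * \sum_(i in S) x i = \sum_i x i.
Proof.
move=> [_ w_cover].
rewrite (eq_bigr (fun S : {set 'I_n} => \sum_i (if i \in S then w S * x i else 0))); last first.
  by move=> S _; rewrite big_distrr big_mkcond.
rewrite exchange_big; apply: eq_bigr => i _.
by rewrite -big_mkcondr -big_distrl /= w_cover mul1r.
Qed.

Lemma lambdaB_balancing B : balanced R B -> balancing_weights B (lambdaB R B).
Proof. by case=> _ [w Bw]; apply: epsilon_spec; exists w. Qed.

Lemma Bsum_setT (v : {set 'I_n} -> R) : (0 < n)%N -> Bsum [set setT] v = v setT.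
Proof.
move=> n_gt0.
have cover_setT (w : {set 'I_n} -> R) i :
    \sum_(S in [set setT] | i \in S) w S = w setT.
  by rewrite big_mkcondr big_set1 in_setT.
have balT : balanced R [set [set: 'I_n]].
  split; first by rewrite inE eq_sym; apply/set0Pn; exists (Ordinal n_gt0); rewrite inE.
  by exists (fun=> 1); split=> [S _|i]; rewrite ?ltr01 ?cover_setT.
have [_ cover] := lambdaB_balancing balT.
by have := cover (Ordinal n_gt0); rewrite cover_setT /Bsum big_set1 => ->; rewrite mul1r.
Qed.

Definition balancing_direction B d := forall i, \sum_(S in B | i \in S) d S = 0.

Lemma balancing_directionN B d :
  balancing_direction B d -> balancing_direction B (fun S => - d S).
Proof. by move=> dir i; rewrite sumrN dir oppr0. Qed.

Lemma balancing_direction_gt0 B d : set0 \notin B -> balancing_direction B d ->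
  (exists2 S, S \in B & d S != 0) -> exists2 S, S \in B & 0 < d S.
Proof.
move=> B0 dir [S SB dS_neq0].
case: (pickP (fun T => (T \in B) && (0 < d T))) => [T /andP[TB dT_gt0]|d_le0].
  by exists T.
have /set0Pn[i iS] : S != set0 by apply: contraNneq B0 => <-.
have dir_i : \sum_(T in B | i \in T) - d T = 0 by rewrite sumrN dir oppr0.
have Nd_ge0 T : (T \in B) && (i \in T) -> 0 <= - d T.
  by case/andP=> TB _; rewrite oppr_ge0 leNgt; have := d_le0 T; rewrite TB /= => ->.
have SiS : (S \in B) && (i \in S) by rewrite SB iS.
have /eqP := psumr_eq0P Nd_ge0 dir_i SiS; rewrite oppr_eq0 => dS0.
by rewrite dS0 in dS_neq0.
Qed.

Lemma ratio_test B w d : (forall S, S \in B -> 0 < w S) -> (exists2 S, S \in B & 0 < d S) ->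
  exists t, [/\ 0 < t, forall S, S \in B -> 0 <= w S - t * d S
    & exists2 S, S \in B & w S - t * d S = 0].
Proof.
move=> w_gt0 [S1 S1B dS1_gt0].
have P1 : (S1 \in B) && (0 < d S1) by rewrite S1B dS1_gt0.
have [S0 /andP[S0B dS0_gt0] S0_min] :=
  @arg_minP _ _ _ S1 (fun S => (S \in B) && (0 < d S)) (fun S => w S / d S) P1.
exists (w S0 / d S0); split; first by rewrite divr_gt0 ?w_gt0.
- move=> S SB; case: (ltrP 0 (d S)) => dS.
    by have := S0_min S; rewrite SB dS ler_pdivlMr // subr_ge0 => ->.
  rewrite subr_ge0 (le_trans _ (ltW (w_gt0 S SB))) //.
  by rewrite mulr_ge0_le0 // ltW // divr_gt0 ?w_gt0.
- by exists S0 => //; rewrite divfK ?subrr ?gt_eqF.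
Qed.

Lemma sum_pos_support B w (F : {set 'I_n} -> R) :
  (forall S, S \in B -> 0 <= w S) -> (forall S, w S = 0 -> F S = 0) ->
  \sum_(S in [set S in B | 0 < w S]) F S = \sum_(S in B) F S.
Proof.
move=> w_ge0 F0; rewrite big_mkcond [RHS]big_mkcond; apply: eq_bigr => S _.
rewrite inE; case SB: (S \in B) => //=; case: ltP => //= wS_le0.
by rewrite F0 //; apply/le_anti; rewrite wS_le0 w_ge0.
Qed.

Lemma pivot B w d : set0 \notin B -> balancing_weights B w -> balancing_direction B d ->
  (exists2 S, S \in B & d S != 0) ->
  exists t, let w' S := w S - t * d S in
  [/\ 0 < t, forall S, S \in B -> 0 <= w' S,
    [set S in B | 0 < w' S] \proper B & balancing_weights [set S in B | 0 < w' S] w'].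
Proof.
move=> B0 [w_gt0 cover] dir d_neq0.
have [t [t_gt0 w'_ge0 [S0 S0B w'S0]]] := ratio_test w_gt0 (balancing_direction_gt0 B0 dir d_neq0).
exists t; split=> //.
- apply/properP; split; first by apply/subsetP => S; rewrite inE => /andP[].
  by exists S0 => //; rewrite inE S0B w'S0 ltxx.
- split=> [S|i]; first by rewrite inE => /andP[].
  rewrite big_mkcondr sum_pos_support //; last by move=> S ->; case: ifP.
  by rewrite -big_mkcondr sumrB cover -big_distrr /= dir mulr0 subr0.
Qed.

Lemma pivot_gt B w d (g : {set 'I_n} -> R) c :
  set0 \notin B -> balancing_weights B w -> balancing_direction B d ->
  (exists2 S, S \in B & d S != 0) -> c < \sum_(S in B) w S * g S ->
  exists B1 w1, [/\ B1 \proper B, balancing_weights B1 w1 & c < \sum_(S in B1) w1 S * g S].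
Proof.
move=> B0 Bw dir [S1 dS1 dS1_neq0] c_lt.
have Nd_neq0 : exists2 S, S \in B & - d S != 0 by exists S1; rewrite ?oppr_eq0.
have [t [t_gt0 w1_ge0 B1_proper B1w]] := pivot B0 Bw dir (ex_intro2 _ _ S1 dS1 dS1_neq0).
have [s [s_gt0 w2_ge0 B2_proper B2w]] := pivot B0 Bw (balancing_directionN dir) Nd_neq0.
set X := \sum_(S in B) w S * g S in c_lt.
have obj e u (ge0 : forall S, S \in B -> 0 <= w S - u * e S) :
    \sum_(S in [set S in B | 0 < w S - u * e S]) (w S - u * e S) * g S =
    X - u * \sum_(S in B) e S * g S.
  rewrite sum_pos_support //; last by move=> S ->; rewrite mul0r.
  by rewrite /X big_distrr -sumrB; apply: eq_bigr => T _ /=; rewrite mulrBl mulrA.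
(* The objective is affine along the line [w - u d], so it stays above [c] in one direction. *)
case: (ltrP c (X - t * \sum_(S in B) d S * g S)) => [lt1|le1].
  by rewrite -obj // in lt1; exists [set S in B | 0 < w S - t * d S], (fun S => w S - t * d S).
case: (ltrP c (X - s * \sum_(S in B) - d S * g S)) => [lt2|le2].
  by rewrite -obj // in lt2; exists [set S in B | 0 < w S - s * - d S], (fun S => w S - s * - d S).
move: le2; under eq_bigr do rewrite mulNr; rewrite sumrN mulrN opprK => le2.
exfalso; nra.
Qed.

Lemma minimal_balanced_weights_eq B w1 w2 : minimal_balanced R B ->
  balancing_weights B w1 -> balancing_weights B w2 -> {in B, w1 =1 w2}.
Proof.
move=> [[B0 _] B_min] Bw1 Bw2 S SB; apply/eqP; apply: contraT => w12_neq.
have dir : balancing_direction B (fun T => w1 T - w2 T).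
  by move=> i; rewrite sumrB Bw1.2 Bw2.2 subrr.
have d_neq0 : exists2 T, T \in B & w1 T - w2 T != 0 by exists S; rewrite ?subr_eq0.
have [t [_ _ B1_proper B1w]] := pivot B0 Bw1 dir d_neq0.
case: (B_min _ B1_proper); split; last by eexists; exact: B1w.
by apply: contra B0; apply: (subsetP (proper_sub B1_proper)).
Qed.

Lemma Bsum_minimal_balanced B w g : minimal_balanced R B -> balancing_weights B w ->
  Bsum B g = \sum_(S in B) w S * g S.
Proof.
move=> B_min Bw; apply: eq_bigr => S SB.
by rewrite (minimal_balanced_weights_eq B_min (lambdaB_balancing B_min.1) Bw SB).
Qed.

Lemma exists_minimal_balanced_gt B w g c : set0 \notin B -> balancing_weights B w ->
  c < \sum_(S in B) w S * g S -> exists2 B', minimal_balanced R B' & c < Bsum B' g.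
Proof.
have [k] := ubnP #|B|; elim: k B w => // k IH B w B_card B0 Bw c_lt.
have [B_min|B_nmin] := classic (minimal_balanced R B).
  by exists B; rewrite // (Bsum_minimal_balanced _ B_min Bw).
have [B' B'_proper [_ [mu B'mu]]] : exists2 B' : {set {set 'I_n}}, B' \proper B & balanced R B'.
  apply: NNPP => no_sub; apply: B_nmin; split=> [|B' B'_proper B'_bal].
    by split=> //; exists w.
  by apply: no_sub; exists B'.
pose d S := (if S \in B' then mu S else 0) - w S.
have dir : balancing_direction B d.
  move=> i; rewrite sumrB Bw.2 -(B'mu.2 i); apply/eqP; rewrite subr_eq0; apply/eqP.
  rewrite big_mkcond [RHS]big_mkcond; apply: eq_bigr => S _.
  case: (boolP (S \in B')) => SB'; last by case: (_ && _).
  by rewrite (subsetP (proper_sub B'_proper) _ SB').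
have d_neq0 : exists2 S, S \in B & d S != 0.
  have [_ [S SB SB']] := properP B'_proper.
  by exists S; rewrite // /d (negbTE SB') sub0r oppr_eq0 gt_eqF // Bw.1.
have [B1 [w1 [B1_proper B1w c_lt1]]] := pivot_gt B0 Bw dir d_neq0 c_lt.
apply: (IH B1 w1 _ _ B1w c_lt1).
- by apply: leq_trans (proper_card B1_proper) _; rewrite -ltnS.
- by apply: contra B0; apply: (subsetP (proper_sub B1_proper)).
Qed.

End Balanced.

Section BondarevaShapley.
Variables (R : realFieldType) (n : nat) (v : {set 'I_n} -> R).

(* The core in the form of [farkas]: row [inl S] is [x(S) >= v S], row [inr tt] is
   [- x(N) >= - v N]. *)
Definition core_lhs (o : {set 'I_n} + unit) (k : nat) : R :=
  match o with
  | inl T => if insub k is Some i then (i \in T)%:R else 0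
  | inr _ => -1
  end.

Definition core_rhs (o : {set 'I_n} + unit) : R :=
  match o with inl T => v T | inr _ => - v setT end.

Lemma core_lhs_coalition S (i : 'I_n) : core_lhs (inl S) i = (i \in S)%:R.
Proof. by rewrite /= valK. Qed.

Lemma dot_core_lhs_coalition S x : dot n (core_lhs (inl S)) x = \sum_(i in S) x (val i).
Proof.
rewrite /dot [RHS]big_mkcond; apply: eq_bigr => i _.
by rewrite core_lhs_coalition; case: (i \in S); rewrite ?mul1r ?mul0r.
Qed.

Lemma dot_core_lhs_grand x : dot n (core_lhs (inr tt)) x = - \sum_(i < n) x i.
Proof. by rewrite /dot -sumrN; apply: eq_bigr => i _; rewrite mulN1r. Qed.

Lemma in_core_of_feasible x : (forall o, core_rhs o <= dot n (core_lhs o) x) ->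
  in_core v (\row_i x (val i)).
Proof.
move=> sol; split=> [S|]; under eq_bigr do rewrite mxE.
  by have := sol (inl S); rewrite dot_core_lhs_coalition.
have sum_setT : \sum_(i in [set: 'I_n]) x (val i) = \sum_(i < n) x i.
  by apply: eq_bigl => i; rewrite in_setT.
have := sol (inl setT); have := sol (inr tt).
rewrite dot_core_lhs_coalition dot_core_lhs_grand sum_setT /=; lra.
Qed.

Lemma balanced_excess_of_cover (y : {set 'I_n} -> R) (Y : R) : is_game v ->
  (forall S, 0 <= y S) -> 0 <= Y -> (forall i : 'I_n, \sum_(S : {set 'I_n} | i \in S) y S = Y) ->
  Y * v setT < \sum_S y S * v S ->
  exists (B : {set {set 'I_n}}) w,
    [/\ set0 \notin B, balancing_weights B w & v setT < \sum_(S in B) w S * v S].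
Proof.
move=> v0 y_ge0 Y_ge0 cover excess.
have y_cover0 (S : {set 'I_n}) i : Y = 0 -> i \in S -> y S = 0.
  by move=> Y0 iS; apply: (psumr_eq0P (fun T _ => y_ge0 T) (etrans (cover i) Y0)).
have Y_gt0 : 0 < Y.
  rewrite lt_def Y_ge0 andbT; apply: contraTneq excess => Y0.
  rewrite Y0 mul0r big1 ?ltxx // => S _.
  by have [->|[i iS]] := set_0Vmem S; rewrite ?v0 ?mulr0 // (y_cover0 S i) ?mul0r.
pose B := [set S | (S != set0) && (0 < y S)].
have outside (S : {set 'I_n}) : S \notin B -> S = set0 \/ y S = 0.
  rewrite inE negb_and negbK -leNgt => /orP[/eqP|yS_le0]; first by left.
  by right; apply/le_anti; rewrite yS_le0 y_ge0.
exists B, (fun S => y S / Y); split.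
- by rewrite inE eqxx.
- split=> [S|i]; first by rewrite inE => /andP[_ yS_gt0]; rewrite divr_gt0.
  rewrite -big_distrl /= -[RHS](mulfV (lt0r_neq0 Y_gt0)); congr (_ / _).
  rewrite -(cover i) big_mkcondl; apply: eq_bigr => S iS; case: ifPn => // /outside[S0|//].
  by rewrite S0 inE in iS.
- rewrite big_rmcond => [|S /outside[->|->]]; last 2 first.
  + by rewrite v0 mulr0.
  + by rewrite mul0r mul0r.
  rewrite (eq_bigr (fun S => y S * v S / Y)) => [|S _]; last by rewrite mulrAC.
  by rewrite -big_distrl /= ltr_pdivlMr // mulrC.
Qed.

Lemma core_empty_balanced_excess : is_game v -> ~ (exists x, in_core v x) ->
  exists (B : {set {set 'I_n}}) w,
    [/\ set0 \notin B, balancing_weights B w & v setT < \sum_(S in B) w S * v S].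
Proof.
move=> v0 core0.
have [y [y_ge0 y_col y_pos]] : exists y, farkas_certificate n core_lhs core_rhs y.
  by apply: farkas => x /in_core_of_feasible x_core; apply: core0; exists (\row_i x (val i)).
have sum_split (F : {set 'I_n} + unit -> R) :
    \sum_o F o = \sum_(S : {set 'I_n}) F (inl S) + F (inr tt).
  by rewrite big_sumType /= (big_pred1 tt) // => -[].
apply: (@balanced_excess_of_cover (fun S => y (inl S)) (y (inr tt))) => //.
- move=> i; have := y_col i (ltn_ord i); rewrite sum_split /= mulrN1 => /eqP.
  rewrite subr_eq0 => /eqP <-; rewrite big_mkcond; apply: eq_bigr => S _.
  by rewrite valK; case: (i \in S); rewrite ?mulr1 ?mulr0.
- move: y_pos; rewrite sum_split /=; set Z := \sum_S _; lra.
Qed.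

Theorem BG_core_nonempty : (0 < n)%N -> BG v -> exists x, in_core v x.
Proof.
move=> n_gt0 [v0 v_BG]; apply: NNPP => core0.
have [B [w [B0 Bw excess]]] := core_empty_balanced_excess v0 core0.
have [B' B'_min excess'] := exists_minimal_balanced_gt B0 Bw excess.
have B'_star : Bstar R B' by split=> // B'T; move: excess'; rewrite B'T Bsum_setT ?ltxx.
by have := v_BG _ B'_star; rewrite leNgt excess'.
Qed.

End BondarevaShapley.

Section CharacteristicMatrix.
Variables (R : realFieldType) (n : nat).
Implicit Types (U : {set {set 'I_n}}) (x y : 'rV[R]_n).

Lemma charmx_mul U x r : (x *m (charmx R U)^T) 0 r = \sum_(i in enum_val r) x 0 i.
Proof.
rewrite !mxE [RHS]big_mkcond; apply: eq_bigr => j _; rewrite !mxE.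
by case: (j \in enum_val r); rewrite ?mulr1 ?mulr0.
Qed.

Lemma charmx_kernel U : \rank (charmx R U) != n ->
  exists2 u : 'rV[R]_n, u != 0 & forall S, S \in U -> \sum_(i in S) u 0 i = 0.
Proof.
move=> rank_neq; have : ~~ row_free (charmx R U)^T by rewrite /row_free mxrank_tr.
rewrite -kermx_eq0 => /rowV0Pn[u /sub_kermxP u_ker u_neq0]; exists u => // S SU.
by rewrite -(enum_rankK_in SU SU) -charmx_mul u_ker mxE.
Qed.

Lemma charmx_rank_inj U x y : \rank (charmx R U) = n ->
  (forall S, S \in U -> \sum_(i in S) x 0 i = \sum_(i in S) y 0 i) -> x = y.
Proof.
move=> rank_n xy_U; have : row_free (charmx R U)^T by rewrite /row_free mxrank_tr rank_n.
move/row_free_inj; apply; apply/rowP => r.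
by rewrite !charmx_mul xy_U // enum_valP.
Qed.

End CharacteristicMatrix.

Section Facets.
Variables (R : realFieldType) (n : nat).
Implicit Types (B : {set {set 'I_n}}) (v : {set 'I_n} -> R) (u x : 'rV[R]_n).

Lemma balanced_sum_eq0 B u : balanced R B ->
  (forall S, S \in B -> \sum_(i in S) u 0 i = 0) -> \sum_i u 0 i = 0.
Proof.
move=> B_bal u_B; rewrite -(balancing_weights_sum _ (lambdaB_balancing B_bal)).
by rewrite big1 // => S SB; rewrite u_B ?mulr0.
Qed.

Lemma in_core_tight B v x : balanced R B -> Bsum B v = v setT -> in_core v x ->
  forall S, S \in B -> \sum_(i in S) x 0 i = v S.
Proof.
move=> B_bal facet_eq [x_ge x_N] S SB.
have [lam_gt0 _] := lambdaB_balancing B_bal.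
set lam := lambdaB R B in lam_gt0.
have slack_sum : \sum_(T in B) lam T * (\sum_(i in T) x 0 i - v T) = 0.
  under eq_bigr do rewrite mulrBr.
  by rewrite sumrB (balancing_weights_sum _ (lambdaB_balancing B_bal)) x_N -facet_eq subrr.
have slack_ge0 T : T \in B -> 0 <= lam T * (\sum_(i in T) x 0 i - v T).
  by move=> TB; rewrite mulr_ge0 ?subr_ge0 ?x_ge // ltW // lam_gt0.
move/eqP: (psumr_eq0P slack_ge0 slack_sum SB); rewrite mulf_eq0 gt_eqF ?lam_gt0 //=.
by rewrite subr_eq0 => /eqP.
Qed.

Definition kernel_game u (S : {set 'I_n}) : R := - `|\sum_(i in S) u 0 i|.

Lemma kernel_game_setT u : \sum_i u 0 i = 0 -> kernel_game u setT = 0.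
Proof.
rewrite /kernel_game.
have -> : \sum_(i in [set: 'I_n]) u 0 i = \sum_i u 0 i by apply: eq_bigl => i; rewrite in_setT.
by move=> ->; rewrite normr0 oppr0.
Qed.

Lemma kernel_game_facet B u : balanced R B ->
  (forall S, S \in B -> \sum_(i in S) u 0 i = 0) -> facet B (kernel_game u).
Proof.
move=> B_bal u_B; have u_N := kernel_game_setT (balanced_sum_eq0 B_bal u_B).
split; first split.
- by rewrite /is_game /kernel_game big_set0 normr0 oppr0.
- move=> B' [[B'_bal _] _]; rewrite u_N; apply: sumr_le0 => S SB'.
  have [lam_gt0 _] := lambdaB_balancing B'_bal.
  by rewrite mulr_ge0_le0 ?(ltW (lam_gt0 _ SB')) // /kernel_game oppr_le0.
- by rewrite u_N /Bsum big1 // => S SB; rewrite /kernel_game u_B ?normr0 ?oppr0 ?mulr0.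
Qed.

Lemma kernel_game_core u : \sum_i u 0 i = 0 ->
  in_core (kernel_game u) 0 /\ in_core (kernel_game u) u.
Proof.
move=> u_sum; rewrite /in_core kernel_game_setT //; split; split=> [S|] //.
- by rewrite big1 /kernel_game ?oppr_le0 // => i _; rewrite mxE.
- by rewrite big1 // => i _; rewrite mxE.
- by rewrite /kernel_game lerNl -normrN ler_norm.
Qed.

End Facets.

Theorem theorem18 (R : realFieldType) (n p : nat) (hn : (0 < n)%N) (hp : (0 < p)%N)
    (B : 'I_p -> {set {set 'I_n}}) (hB : forall k, Bstar R (B k)) :
  (forall v : {set 'I_n} -> R, (forall k, facet (B k) v) -> core_singleton v) <->
  \rank (charmx R (\bigcup_(k < p) B k)) = n.
Proof.
have B_bal k : balanced R (B k) by case: (hB k) => [[]].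
have in_U k S : S \in B k -> S \in \bigcup_(k < p) B k by move=> SB; apply/bigcupP; exists k.
split=> [single|rank_n v v_facets].
  apply/eqP; apply: contraT => /charmx_kernel[u u_neq0 u_U].
  have u_B k S (SB : S \in B k) := u_U S (in_U k S SB).
  have [x [_ x_uniq]] := single _ (fun k => kernel_game_facet (B_bal k) (u_B k)).
  have [core0 core_u] := kernel_game_core (balanced_sum_eq0 (B_bal (Ordinal hp)) (u_B _)).
  by move: u_neq0; rewrite (x_uniq _ core_u) (x_uniq _ core0) eqxx.
have [x x_core] := BG_core_nonempty hn (v_facets (Ordinal hp)).1.
exists x; split=> // y y_core; apply: (charmx_rank_inj rank_n) => S /bigcupP[k _ SB].
by rewrite !(in_core_tight (B_bal k) (v_facets k).2).
Qed.
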